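(* Let $B$ be an infinite set and assume $2^{2^{|B|}}=(2^{|B|})^+$. Let $(E,\mathcal L)$ be a local representation over $B$ with $|E|=2^{2^{|B|}}$ which is $(2^{|B|})^+$-exact (such exists). Let $B'\subseteq B$ be infinite and $E'=\{e\in E:\{\psi\in B^E:\psi_e\in B'\}\in\mathcal L\}$ with its sub-local-representation structure over $B'$. Then $E'$ is a regular local representation over $B'$ of cardinality $2^{2^{|B|}}$.
   Context: A local representation over $B$ is $(E,\mathcal L)$ with $\mathcal L$ an ultrafilter on the cylinder Boolean algebra of $B^E$ (sets $\{\psi\in B^E:(\psi_{e_1},\dots,\psi_{e_n})\in R\}$, $e_i\in E$, $R\subseteq B^n$). The sub-local-representation structure on $E'$ over $B'$ is the ultrafilter $\mathcal L'$ on the cylinders of $B'^{E'}$ with $\{\psi':(\psi'_{e_1},\dots,\psi'_{e_n})\in R\}\in\mathcal L'$ iff $\{\psi\in B^E:(\psi_{e_1},\dots,\psi_{e_n})\in R\}\in\mathcal L$ ($e_i\in E'$, $R\subseteq B'^n$). Separated: $\{\psi:\psi_{e_1}=\psi_{e_2}\}\in\mathcal L$ only if $e_1=e_2$. For $\eta:I\to E$, the pullback of $\mathcal L$ by $\eta$ is the ultrafilter of cylinders $C\subseteq B^I$ with $\{\psi:(\psi_{\eta(i)})_{i\in I}\in C\}\in\mathcal L$; projection to $B^I$ of an ultrafilter on the cylinders of $B^{I\cup\{i_0\}}$ ($i_0\notin I$) consists of the cylinders of $B^I$ whose preimage under restriction lies in it. For an infinite cardinal $\mathfrak m$, $(E,\mathcal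 L)$ is $\mathfrak m$-exact if it is separated and for every $I$ with $|I|<\mathfrak m$, $i_0\notin I$, $\eta:I\to E$, and ultrafilter $\mathcal U$ on the cylinders of $B^{I\cup\{i_0\}}$ projecting to the pullback of $\mathcal L$ by $\eta$, there is $e\in E$ with the pullback of $\mathcal L$ by $\eta\cup\{i_0\mapsto e\}$ equal to $\mathcal U$. Regular means $|E|$-exact. *)

From Stdlib Require Import List.
Import ListNotations.
Set Implicit Arguments.

Definition injective {X Y : Type} (f : X -> Y) : Prop :=
  forall x y, f x = f y -> x = y.
Definition card_le (X Y : Type) : Prop := exists f : X -> Y, injective f.
Definition card_lt (X Y : Type) : Prop := card_le X Y /\ ~ card_le Y X.
Definition card_eq (X Y : Type) : Prop :=
  exists f : X -> Y, injective f /\ forall y, exists x, f x = y.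
Definition infinite (X : Type) : Prop := ~ exists l : list X, forall x, In x l.

Definition pow (X : Type) : Type := X -> Prop.

(* |I| < (2^|B|)^+, i.e. |I| <= 2^|B| (definition of the successor cardinal) *)
Definition lt_succ_pow (B I : Type) : Prop := card_le I (pow B).

(* 2^(2^|B|) = (2^|B|)^+ : every cardinal strictly below 2^(2^|B|)
   (represented by a subset of 2^(2^|B|)) is at most 2^|B|. *)
Definition gch_at (B : Type) : Prop :=
  forall S : pow (pow B) -> Prop,
    ~ card_le (pow (pow B)) {x | S x} -> card_le {x | S x} (pow B).

Definition cylinder {E B : Type} (C : (E -> B) -> Prop) : Prop :=
  exists (es : list E) (R : list B -> Prop), forall psi, C psi <-> R (map psi es).

Record cyl_ultrafilter {E B : Type} (L : ((E -> B) -> Prop) -> Prop) : Prop := {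
  uf_cyl : forall C, L C -> cylinder C;
  uf_full : L (fun _ => True);
  uf_proper : ~ L (fun _ => False);
  uf_up : forall C D, L C -> cylinder D -> (forall psi, C psi -> D psi) -> L D;
  uf_meet : forall C D, L C -> L D -> L (fun psi => C psi /\ D psi);
  uf_ultra : forall C, cylinder C -> L C \/ L (fun psi => ~ C psi)
}.

Definition local_rep {E B : Type} (L : ((E -> B) -> Prop) -> Prop) : Prop :=
  cyl_ultrafilter L.

Definition separated {E B : Type} (L : ((E -> B) -> Prop) -> Prop) : Prop :=
  forall e1 e2, L (fun psi => psi e1 = psi e2) -> e1 = e2.

Definition pullback {I E B : Type} (eta : I -> E) (L : ((E -> B) -> Prop) -> Prop)
  : ((I -> B) -> Prop) -> Prop :=
  fun C => cylinder C /\ L (fun psi => C (fun i => psi (eta i))).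

(* I \cup {i0} is modelled by option I, with i0 = None;
   projection of an ultrafilter on cylinders of B^(option I) to B^I *)
Definition proj_opt {I B : Type} (U : ((option I -> B) -> Prop) -> Prop)
  : ((I -> B) -> Prop) -> Prop :=
  fun C => cylinder C /\ U (fun phi => C (fun i => phi (Some i))).

Definition extend {I E : Type} (eta : I -> E) (e : E) : option I -> E :=
  fun o => match o with Some i => eta i | None => e end.

(* exactness with respect to a cardinal m, where [small I] means |I| < m *)
Definition exact_wrt {E B : Type} (small : Type -> Prop)
  (L : ((E -> B) -> Prop) -> Prop) : Prop :=
  separated L /\
  forall (I : Type), small I ->
  forall (eta : I -> E) (U : ((option I -> B) -> Prop) -> Prop),
    cyl_ultrafilter U ->
    (forall C, proj_opt U C <-> pullback eta L C) ->
    exists e : E, forall C, pullback (extend eta e) L C <-> U C.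

Definition regular {E B : Type} (L : ((E -> B) -> Prop) -> Prop) : Prop :=
  exact_wrt (fun I : Type => card_lt I E) L.

Definition sub_domain {E B : Type} (L : ((E -> B) -> Prop) -> Prop) (B' : B -> Prop)
  : E -> Prop := fun e => L (fun psi => B' (psi e)).

Definition sub_rep {E B : Type} (L : ((E -> B) -> Prop) -> Prop)
  (E' : E -> Prop) (B' : B -> Prop)
  : (({e | E' e} -> {b | B' b}) -> Prop) -> Prop :=
  fun C' => exists (es : list {e | E' e}) (R : list {b | B' b} -> Prop),
    (forall psi', C' psi' <-> R (map psi' es)) /\
    L (fun psi => exists bs : list {b | B' b},
          map (@proj1_sig _ _) bs = map (fun e => psi (proj1_sig e)) es /\ R bs).

(* Fix a retraction r : B -> B'.  Every e in E' lands in B' L-almost surely, so a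
   condition on finitely many coordinates from E' holds L-almost surely for psi iff it
   does for r o psi.  Hence L' is an ultrafilter, separated when L is, and a type over
   fewer than |E'| <= 2^2^|B| = (2^|B|)^+ parameters from E' can be pushed from B' into
   B, realised in E by exactness, and the realisation lies in E'.

   If E' had at most 2^|B| elements, exactness would realise over E'
   the type "a new element of B' differing from all values", built from a free
   ultrafilter on B'; the realisation would lie in E' and differ from itself.  So E' is
   not below 2^|B|, and 2^2^|B| = (2^|B|)^+ and Schroeder-Bernstein give |E'| = 2^2^|B|. *)
From mathcomp Require Import filter.
From Stdlib Require Import List PeanoNat Classical ClassicalEpsilon.
From Stdlib Require Import FunctionalExtensionality PropExtensionality ProofIrrelevance.
Import ListNotations.

Lemma val_inj {X : Type} {P : X -> Prop} (u v : {x | P x}) :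
  proj1_sig u = proj1_sig v -> u = v.
Proof. exact (eq_sig_hprop (fun x => proof_irrelevance (P x)) u v). Qed.

Lemma infinite_inhabited {X : Type} : infinite X -> inhabited X.
Proof.
intros Hinf; apply NNPP; intros Hempty; apply Hinf.
exists []; intros x; exfalso; exact (Hempty (inhabits x)).
Qed.

Lemma infinite_sig_not_covered {X : Type} (P : X -> Prop) :
  infinite {x | P x} -> forall l : list X, exists x, P x /\ ~ In x l.
Proof.
intros Hinf l; apply NNPP; intros Hcover; apply Hinf.
assert (Hsub : exists l' : list {x | P x}, forall y, In (proj1_sig y) l -> In y l').
{ clear Hcover; induction l as [|a l [l' Hl']].
  - exists []; intros y [].
  - destruct (classic (P a)) as [Pa|nPa].
    + exists (exist _ a Pa :: l'); intros y [Hya|Hy]; [left; apply val_inj|right]; auto.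
    + exists l'; intros y [Hya|Hy]; auto.
      exfalso; apply nPa; rewrite Hya; exact (proj2_sig y). }
destruct Hsub as [l' Hl']; exists l'; intros y; apply Hl'.
apply NNPP; intros Hy; apply Hcover; exists (proj1_sig y); split; auto.
exact (proj2_sig y).
Qed.

Lemma card_le_trans {X Y Z : Type} : card_le X Y -> card_le Y Z -> card_le X Z.
Proof. intros [f Hf] [g Hg]; exists (fun x => g (f x)); intros x y H; auto. Qed.

Lemma card_le_sig (X : Type) (P : X -> Prop) : card_le {x | P x} X.
Proof. exists (@proj1_sig _ _); exact val_inj. Qed.

Lemma card_le_antisym (X Y : Type) : card_le X Y -> card_le Y X -> card_eq X Y.
Proof.
intros [f Hf] [g Hg].
(* [chain n x]: x is reached from a point outside the range of g by n steps of g o f;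
   on such points the bijection is f, elsewhere it is g^-1. *)
set (chain := fix chain (n : nat) : X -> Prop :=
  match n with
  | O => fun x => ~ exists y, g y = x
  | S m => fun x => exists x', chain m x' /\ g (f x') = x
  end).
set (C := fun x => exists n, chain n x).
assert (Hrange : forall x, ~ C x -> exists y, g y = x).
{ intros x Hx; apply NNPP; intros H; apply Hx; exists O; exact H. }
set (h := fun x => match excluded_middle_informative (C x) with
  | left _ => f x
  | right H => proj1_sig (constructive_indefinite_description _ (Hrange x H))
  end).
exists h; split.
- intros x1 x2; unfold h.
  destruct excluded_middle_informative as [c1|c1];
    destruct excluded_middle_informative as [c2|c2].
  + apply Hf.
  + destruct constructive_indefinite_description as [y2 Hy2]; simpl; intros E.
    exfalso; apply c2; destruct c1 as [n Hn]; exists (S n), x1; split; auto.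
    rewrite E; auto.
  + destruct constructive_indefinite_description as [y1 Hy1]; simpl; intros E.
    exfalso; apply c1; destruct c2 as [n Hn]; exists (S n), x2; split; auto.
    rewrite <- E; auto.
  + destruct constructive_indefinite_description as [y1 Hy1];
      destruct constructive_indefinite_description as [y2 Hy2]; simpl.
    intros E; subst; auto.
- intros y; destruct (classic (C (g y))) as [[[|n] Hn]|Hc].
  + exfalso; apply Hn; exists y; auto.
  + destruct Hn as [x' [Hx' E]]; apply Hg in E; exists x'; unfold h.
    destruct excluded_middle_informative as [c|c]; auto.
    exfalso; apply c; exists n; auto.
  + exists (g y); unfold h; destruct excluded_middle_informative as [c|c]; [contradiction|].
    destruct constructive_indefinite_description as [y' Hy']; simpl; apply Hg; auto.
Qed.

Lemma gch_card_le (B I : Type) : gch_at B ->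
  card_le I (pow (pow B)) -> ~ card_le (pow (pow B)) I -> card_le I (pow B).
Proof.
intros Hgch [k Hk] Hn.
set (S := fun x => exists i, k i = x).
destruct (Hgch S) as [g Hg].
- intros [h Hh]; apply Hn.
  exists (fun x => proj1_sig (constructive_indefinite_description _ (proj2_sig (h x)))).
  intros x y Hxy; apply Hh, val_inj.
  destruct (constructive_indefinite_description _ (proj2_sig (h x))) as [i1 Hi1].
  destruct (constructive_indefinite_description _ (proj2_sig (h y))) as [i2 Hi2].
  simpl in Hxy; subst; rewrite <- Hi1, <- Hi2; reflexivity.
- exists (fun i => g (exist S (k i) (ex_intro _ i eq_refl))).
  intros x y H; apply Hg in H; apply Hk; exact (f_equal (@proj1_sig _ _) H).
Qed.

Lemma gch_card_lt (B X I : Type) : gch_at B ->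
  card_le X (pow (pow B)) -> card_lt I X -> card_le I (pow B).
Proof.
intros Hgch HX [HIX HnXI]; apply gch_card_le; auto.
- exact (card_le_trans HIX HX).
- intros HI; apply HnXI; exact (card_le_trans HX HI).
Qed.

Lemma cylinder_map {J B : Type} (R : list B -> Prop) (js : list J) :
  cylinder (fun phi : J -> B => R (map phi js)).
Proof. exists js, R; tauto. Qed.

Lemma cylinder_coord {J B : Type} (P : B -> Prop) (j : J) :
  cylinder (fun phi : J -> B => P (phi j)).
Proof.
exists [j], (Forall P); intros phi; split; [intros; repeat constructor; auto|].
intros H; inversion H; auto.
Qed.

Lemma cylinder_eq {J B : Type} (j k : J) : cylinder (fun phi : J -> B => phi j = phi k).
Proof. exists [j; k], (fun l => match l with [x; y] => x = y | _ => False end); tauto. Qed.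

Lemma cylinder_comp {J J' B B' : Type} (C : (J -> B) -> Prop) (k : J -> J') (v : B' -> B) :
  cylinder C -> cylinder (fun phi : J' -> B' => C (fun j => v (phi (k j)))).
Proof.
intros [js [R HR]]; exists (map k js), (fun l => R (map v l)).
intros phi; rewrite HR, !map_map; tauto.
Qed.

Lemma cylinder_not {J B : Type} (C : (J -> B) -> Prop) :
  cylinder C -> cylinder (fun phi => ~ C phi).
Proof. intros [js [R HR]]; exists js, (fun l => ~ R l); intros phi; rewrite HR; tauto. Qed.

Lemma cylinder_and {J B : Type} (C D : (J -> B) -> Prop) :
  cylinder C -> cylinder D -> cylinder (fun phi => C phi /\ D phi).
Proof.
intros [js [R HR]] [ks [S HS]].
exists (js ++ ks), (fun l => R (firstn (length js) l) /\ S (skipn (length js) l)).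
intros phi; rewrite <- (length_map phi js), map_app, firstn_app, skipn_app, Nat.sub_diag,
  firstn_all, skipn_all, app_nil_r, HR, HS; reflexivity.
Qed.

Lemma cylinder_True {J B : Type} : cylinder (fun _ : J -> B => True).
Proof. exists [], (fun _ => True); tauto. Qed.

Lemma cylinder_False {J B : Type} : cylinder (fun _ : J -> B => False).
Proof. exists [], (fun _ => False); tauto. Qed.

Fixpoint somes {J : Type} (os : list (option J)) : list J :=
  match os with
  | [] => []
  | Some j :: os => j :: somes os
  | None :: os => somes os
  end.

Fixpoint fill {J B : Type} (os : list (option J)) (vs : list B) (b : B) : list B :=
  match os, vs with
  | [], _ => []
  | None :: os, vs => b :: fill os vs b
  | Some _ :: os, v :: vs => v :: fill os vs b
  | Some _ :: _, [] => []
  end.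

Lemma fill_somes {J B : Type} (g : J -> B) (b : B) (os : list (option J)) :
  fill os (map g (somes os)) b = map (extend g b) os.
Proof. induction os as [|[j|] os IH]; simpl; f_equal; auto. Qed.

Lemma cylinder_integrate {J E B : Type} (f : J -> E) (W : (B -> Prop) -> Prop)
  (D : (option J -> B) -> Prop) :
  cylinder D -> cylinder (fun psi : E -> B => W (fun b => D (extend (fun j => psi (f j)) b))).
Proof.
intros [os [R HR]]; exists (map f (somes os)), (fun vs => W (fun b => R (fill os vs b))).
intros psi; rewrite map_map.
replace (fun b => R (fill os (map (fun j => psi (f j)) (somes os)) b))
  with (fun b => D (extend (fun j => psi (f j)) b)); [tauto|].
extensionality b; apply propositional_extensionality; rewrite fill_somes; apply HR.
Qed.

Lemma uf_iff_on {J B : Type} (L : ((J -> B) -> Prop) -> Prop) (G X Y : (J -> B) -> Prop) :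
  cyl_ultrafilter L -> L G -> cylinder X -> cylinder Y ->
  (forall psi, G psi -> (X psi <-> Y psi)) -> (L X <-> L Y).
Proof.
intros HL HG HX HY H; split; intros H0.
- apply (uf_up HL (fun psi => X psi /\ G psi)); [apply uf_meet; auto|auto|].
  intros psi [? ?]; apply H; auto.
- apply (uf_up HL (fun psi => Y psi /\ G psi)); [apply uf_meet; auto|auto|].
  intros psi [? ?]; apply H; auto.
Qed.

Lemma ultrafilter_const {T : Type} (W : (T -> Prop) -> Prop) (P : Prop) :
  UltraFilter W -> W (fun _ => P) <-> P.
Proof.
intros HW; split; intros H.
- apply NNPP; intros Hn; apply (filter_not_empty W).
  exact (filterS (fun _ p => Hn p) H).
- exact (filterS (fun _ _ => H) filterT).
Qed.

Lemma free_ultrafilter_exists {B : Type} (B' : B -> Prop) : infinite {b | B' b} ->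
  exists W : (B -> Prop) -> Prop,
    UltraFilter W /\ W B' /\ forall b, W (fun x => x <> b).
Proof.
intros Hinf.
set (F := fun A : B -> Prop => exists l : list B, forall x, B' x -> ~ In x l -> A x).
assert (HF : ProperFilter F).
{ assert (Filter F).
  { constructor.
    - exists []; intros; exact I.
    - intros P Q [l1 H1] [l2 H2]; exists (l1 ++ l2); intros x Hx Hn; split;
        [apply H1|apply H2]; auto; intros Hi; apply Hn; apply in_or_app; auto.
    - intros P Q PQ [l H]; exists l; intros; apply PQ; auto. }
  constructor; auto.
  intros [l Hl]; destruct (infinite_sig_not_covered B' Hinf l) as [x [Hx Hnx]].
  exact (Hl x Hx Hnx). }
destruct (ultraFilterLemma HF) as [W [HW FW]].
exists W; split; [|split]; auto.
- apply FW; exists []; auto.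
- intros b; apply FW; exists [b]; intros x _ Hn ->; apply Hn; left; auto.
Qed.

(* The type of a new point, drawn W-generically, over the points [f j] of L. *)
Definition uf_extend {J E B : Type} (f : J -> E) (L : ((E -> B) -> Prop) -> Prop)
  (W : (B -> Prop) -> Prop) : ((option J -> B) -> Prop) -> Prop :=
  fun D => cylinder D /\ L (fun psi => W (fun b => D (extend (fun j => psi (f j)) b))).

Lemma uf_extend_ultrafilter {J E B : Type} (f : J -> E) (L : ((E -> B) -> Prop) -> Prop)
  (W : (B -> Prop) -> Prop) :
  cyl_ultrafilter L -> UltraFilter W -> cyl_ultrafilter (uf_extend f L W).
Proof.
intros HL HW; constructor.
- intros C [HC _]; exact HC.
- split; [exact cylinder_True|].
  apply (uf_up HL _ (uf_full HL) (cylinder_integrate f W _ cylinder_True)).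
  intros psi _; exact filterT.
- intros [_ H]; apply (uf_proper HL), (uf_up HL _ H cylinder_False).
  intros psi; exact (proj1 (ultrafilter_const W False HW)).
- intros C D [_ HC] HD HCD; split; auto.
  apply (uf_up HL _ HC (cylinder_integrate f W D HD)).
  intros psi; apply filterS; intros b; apply HCD.
- intros C D [HC1 HC2] [HD1 HD2]; split; [exact (cylinder_and C D HC1 HD1)|].
  apply (uf_up HL _ (uf_meet HL _ _ HC2 HD2)).
  + exact (cylinder_integrate f W _ (cylinder_and C D HC1 HD1)).
  + intros psi [HCb HDb]; exact (filterI HCb HDb).
- intros C HC.
  destruct (uf_ultra HL (cylinder_integrate f W C HC)) as [H|H]; [left; split; auto|right].
  split; [exact (cylinder_not C HC)|].
  apply (uf_up HL _ H (cylinder_integrate f W _ (cylinder_not C HC))).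
  intros psi Hn; destruct (in_ultra_setVsetC
    (fun b => C (extend (fun j => psi (f j)) b)) HW); tauto.
Qed.

Lemma proj_opt_uf_extend {J E B : Type} (f : J -> E) (L : ((E -> B) -> Prop) -> Prop)
  (W : (B -> Prop) -> Prop) : UltraFilter W ->
  forall C, proj_opt (uf_extend f L W) C <-> pullback f L C.
Proof.
intros HW C.
unfold proj_opt, pullback, uf_extend; simpl.
replace (fun psi : E -> B => W (fun _ => C (fun i => psi (f i))))
  with (fun psi : E -> B => C (fun i => psi (f i))).
- split; [intros [HC [_ H]]|intros [HC H]]; auto.
  repeat split; auto; exact (cylinder_comp C Some (fun b => b) HC).
- extensionality psi; apply propositional_extensionality.
  symmetry; apply ultrafilter_const; exact HW.
Qed.

Definition uf_val {J B : Type} {P : B -> Prop} (U : ((J -> {b | P b}) -> Prop) -> Prop)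
  : ((J -> B) -> Prop) -> Prop :=
  fun D => cylinder D /\ U (fun phi => D (fun j => proj1_sig (phi j))).

Lemma uf_val_ultrafilter {J B : Type} {P : B -> Prop}
  (U : ((J -> {b | P b}) -> Prop) -> Prop) : cyl_ultrafilter U -> cyl_ultrafilter (uf_val U).
Proof.
intros HU.
assert (Hcyl : forall D : (J -> B) -> Prop, cylinder D ->
          cylinder (fun phi : J -> {b | P b} => D (fun j => proj1_sig (phi j)))).
{ intros D HD; exact (cylinder_comp D (fun j => j) (@proj1_sig _ _) HD). }
constructor.
- intros C [HC _]; exact HC.
- split; [exact cylinder_True|exact (uf_full HU)].
- intros [_ H]; exact (uf_proper HU H).
- intros C D [_ HC] HD HCD; split; auto.
  apply (uf_up HU _ HC (Hcyl D HD)); auto.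
- intros C D [HC1 HC2] [HD1 HD2]; split; [exact (cylinder_and C D HC1 HD1)|].
  exact (uf_meet HU _ _ HC2 HD2).
- intros C HC; destruct (uf_ultra HU (Hcyl C HC)) as [H|H]; [left|right]; split; auto.
  exact (cylinder_not C HC).
Qed.

Section SubRepresentation.

Variables (B E : Type) (L : ((E -> B) -> Prop) -> Prop) (B' : B -> Prop).
Hypothesis HL : cyl_ultrafilter L.

Local Notation E' := (sub_domain L B').
Local Notation L' := (sub_rep L (sub_domain L B') B').
Local Notation Ety := {e | sub_domain L B' e}.
Local Notation Bty := {b | B' b}.

Lemma sub_domain_all (es : list Ety) :
  L (fun psi => forall e, In e es -> B' (psi (proj1_sig e))).
Proof.
assert (Hcyl : forall es : list Ety,
          cylinder (fun psi : E -> B => forall e, In e es -> B' (psi (proj1_sig e)))).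
{ intros l; exists (map (@proj1_sig _ _) l), (fun vs => forall v, In v vs -> B' v).
  intros psi; rewrite map_map; split.
  - intros H v Hv; apply in_map_iff in Hv; destruct Hv as [e [<- He]]; auto.
  - intros H e He; apply H, (in_map (fun e : Ety => psi (proj1_sig e))), He. }
induction es as [|e es IH].
- apply (uf_up HL _ (uf_full HL) (Hcyl [])); intros psi _ e [].
- apply (uf_up HL _ (uf_meet HL _ _ (proj2_sig e) IH) (Hcyl (e :: es))).
  intros psi [He Hes] e' [<-|He']; auto.
Qed.

Lemma sub_domain_not_small : exact_wrt (fun I : Type => lt_succ_pow B I) L ->
  infinite Bty -> ~ card_le Ety (pow B).
Proof.
intros [_ Hex] Hinf Hle.
destruct (free_ultrafilter_exists B' Hinf) as [W [HW [WB' Wfree]]].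
set (U := uf_extend (fun e : Ety => proj1_sig e) L W).
destruct (Hex Ety Hle _ U (uf_extend_ultrafilter _ _ _ HL HW) (proj_opt_uf_extend _ _ _ HW))
  as [e He].
assert (HeE : E' e).
{ assert (HU : U (fun phi => B' (phi None))).
  { split; [exact (cylinder_coord B' None)|].
    apply (uf_up HL _ (uf_full HL)); [|intros; exact WB'].
    exact (cylinder_integrate _ W _ (cylinder_coord B' None)). }
  apply He in HU; exact (proj2 HU). }
set (e' := exist (sub_domain L B') e HeE).
assert (HU : U (fun phi => phi None <> phi (Some e'))).
{ split; [exact (cylinder_not _ (cylinder_eq None (Some e')))|].
  apply (uf_up HL _ (uf_full HL)); [|intros psi _; exact (Wfree (psi e))].
  exact (cylinder_integrate _ W _ (cylinder_not _ (cylinder_eq None (Some e')))). }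
apply He in HU; destruct HU as [_ HU].
apply (uf_proper HL), (uf_up HL _ HU cylinder_False).
intros psi Hn; apply Hn; reflexivity.
Qed.

Variable b0 : Bty.

Definition retract (b : B) : Bty :=
  match excluded_middle_informative (B' b) with
  | left h => exist _ b h
  | right _ => b0
  end.

Lemma retract_val (b : Bty) : retract (proj1_sig b) = b.
Proof.
unfold retract; destruct excluded_middle_informative as [h|h].
- apply val_inj; reflexivity.
- destruct b; contradiction.
Qed.

Lemma val_retract (b : B) : B' b -> proj1_sig (retract b) = b.
Proof. unfold retract; destruct excluded_middle_informative; simpl; tauto. Qed.

Definition lift (C' : (Ety -> Bty) -> Prop) : (E -> B) -> Prop :=
  fun psi => C' (fun e => retract (psi (proj1_sig e))).

Lemma cylinder_lift (C' : (Ety -> Bty) -> Prop) : cylinder C' -> cylinder (lift C').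
Proof. exact (cylinder_comp C' (@proj1_sig _ _) retract). Qed.

Lemma sub_rep_iff (C' : (Ety -> Bty) -> Prop) : L' C' <-> cylinder C' /\ L (lift C').
Proof.
split.
- intros [es [R [HR HT]]]; split; [exists es, R; auto|].
  apply (uf_up HL _ HT (cylinder_lift C' (ex_intro _ es (ex_intro _ R HR)))).
  intros psi [bs [Hbs HRb]]; apply HR.
  replace (map (fun e => retract (psi (proj1_sig e))) es) with bs; auto.
  rewrite <- map_map, <- Hbs, map_map.
  clear; induction bs; simpl; f_equal; auto using retract_val.
- intros [[es [R HR]] HP]; exists es, R; split; auto.
  apply (uf_up HL _ (uf_meet HL _ _ HP (sub_domain_all es))).
  + exact (cylinder_comp _ (@proj1_sig _ _) (fun b => b) (cylinder_map (fun ys =>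
             exists bs : list Bty, map (@proj1_sig _ _) bs = ys /\ R bs) es)).
  + intros psi [H1 H2]; exists (map (fun e => retract (psi (proj1_sig e))) es); split.
    * rewrite !map_map; apply map_ext_in; intros e He; apply val_retract, H2, He.
    * apply HR, H1.
Qed.

Lemma sub_rep_ultrafilter : cyl_ultrafilter L'.
Proof.
constructor.
- intros C HC; apply sub_rep_iff in HC; tauto.
- apply sub_rep_iff; split; [exact cylinder_True|exact (uf_full HL)].
- intros H; apply sub_rep_iff in H; exact (uf_proper HL (proj2 H)).
- intros C D HC HD HCD; apply sub_rep_iff in HC; apply sub_rep_iff; split; auto.
  apply (uf_up HL _ (proj2 HC) (cylinder_lift D HD)); intros psi; apply HCD.
- intros C D HC HD; apply sub_rep_iff in HC, HD; apply sub_rep_iff; split.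
  + apply cylinder_and; tauto.
  + exact (uf_meet HL _ _ (proj2 HC) (proj2 HD)).
- intros C HC; destruct (uf_ultra HL (cylinder_lift C HC)) as [H|H].
  + left; apply sub_rep_iff; auto.
  + right; apply sub_rep_iff; split; auto; exact (cylinder_not C HC).
Qed.

(* Almost surely the finitely many coordinates read by [C] lie in B', where the
   retraction is the identity. *)
Lemma sub_rep_transfer (J : Type) (f : J -> Ety) (C : (J -> B) -> Prop) : cylinder C ->
  L' (fun psi' => C (fun j => proj1_sig (psi' (f j)))) <->
  L (fun psi => C (fun j => psi (proj1_sig (f j)))).
Proof.
intros HC.
assert (Hlhs := cylinder_comp C f (fun b : Bty => proj1_sig b) HC).
assert (Hrhs := cylinder_comp C (fun j => proj1_sig (f j)) (fun b => b) HC).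
rewrite sub_rep_iff; destruct HC as [js [R HR]].
rewrite (uf_iff_on L _ _ _ HL (sub_domain_all (map f js)) (cylinder_lift _ Hlhs) Hrhs); [tauto|].
intros psi Hin; unfold lift; rewrite !HR.
replace (map _ js) with (map (fun j => psi (proj1_sig (f j))) js); [tauto|].
apply map_ext_in; intros j Hj; symmetry; apply val_retract, Hin, in_map, Hj.
Qed.

Lemma sub_rep_separated : separated L -> separated L'.
Proof.
intros Hsep e1 e2 H; apply val_inj, Hsep.
apply (sub_rep_transfer Ety (fun e => e) _ (cylinder_eq e1 e2)).
apply (uf_up sub_rep_ultrafilter _ H).
- exact (cylinder_comp _ (fun e => e) (fun b : Bty => proj1_sig b) (cylinder_eq e1 e2)).
- intros psi' ->; reflexivity.
Qed.

Lemma proj_opt_uf_val (I : Type) (eta' : I -> Ety) (U' : ((option I -> Bty) -> Prop) -> Prop) :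
  (forall C', proj_opt U' C' <-> pullback eta' L' C') ->
  forall C, proj_opt (uf_val U') C <-> pullback (fun i => proj1_sig (eta' i)) L C.
Proof.
intros Hproj' C; unfold proj_opt, pullback, uf_val.
specialize (Hproj' (fun psi' => C (fun i => proj1_sig (psi' i)))).
unfold proj_opt, pullback in Hproj'.
split; intros [HC H]; split; auto;
  assert (HCval := cylinder_comp C (fun i => i) (fun b : Bty => proj1_sig b) HC).
- destruct H as [_ H]; apply (sub_rep_transfer I eta' C HC).
  exact (proj2 (proj1 Hproj' (conj HCval H))).
- apply (sub_rep_transfer I eta' C HC) in H.
  split; [exact (cylinder_comp C Some (fun b => b) HC)|].
  exact (proj2 (proj2 Hproj' (conj HCval H))).
Qed.

Lemma sub_rep_realizes (I : Type) (eta' : I -> Ety) (U' : ((option I -> Bty) -> Prop) -> Prop)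
  (e' : Ety) : cyl_ultrafilter U' ->
  (forall C, pullback (extend (fun i => proj1_sig (eta' i)) (proj1_sig e')) L C <-> uf_val U' C) ->
  forall C', pullback (extend eta' e') L' C' <-> U' C'.
Proof.
intros HU' He C'.
destruct (classic (cylinder C')) as [HC'|HnC'].
2: { split; [intros [? _]|intros H; apply (uf_cyl HU') in H]; contradiction. }
set (C := fun phi : option I -> B => C' (fun o => retract (phi o))).
assert (HC : cylinder C) by exact (cylinder_comp C' (fun o => o) retract HC').
assert (HCC : (fun phi' : option I -> Bty => C (fun o => proj1_sig (phi' o))) = C').
{ extensionality phi'; unfold C; f_equal; extensionality o; apply retract_val. }
assert (HL'L : L' (fun psi' => C' (fun o => psi' (extend eta' e' o))) <->
          L (fun psi => C (fun o => psi (extend (fun i => proj1_sig (eta' i)) (proj1_sig e') o)))).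
{ rewrite <- HCC, (sub_rep_transfer (option I) (extend eta' e') C HC).
  replace (fun psi : E -> B => C (fun o => psi (proj1_sig (extend eta' e' o))))
    with (fun psi => C (fun o => psi (extend (fun i => proj1_sig (eta' i)) (proj1_sig e') o)));
    [reflexivity|].
  extensionality psi; f_equal; extensionality o; destruct o; reflexivity. }
specialize (He C); unfold pullback, uf_val in He |- *; rewrite HCC in He.
rewrite HL'L; tauto.
Qed.

Lemma sub_rep_regular : gch_at B -> card_le E (pow (pow B)) ->
  exact_wrt (fun I : Type => lt_succ_pow B I) L -> regular L'.
Proof.
intros Hgch HE [Hsep Hex]; split; [exact (sub_rep_separated Hsep)|].
intros I HI eta' U' HU' Hproj'.
assert (Hsmall : lt_succ_pow B I)
  by exact (gch_card_lt B Ety I Hgch (card_le_trans (card_le_sig _ _) HE) HI).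
destruct (Hex I Hsmall _ (uf_val U') (uf_val_ultrafilter U' HU')
  (proj_opt_uf_val I eta' U' Hproj')) as [e He].
assert (HeE : E' e).
{ assert (HU : uf_val U' (fun phi => B' (phi None))).
  { split; [exact (cylinder_coord B' None)|].
    apply (uf_up HU' _ (uf_full HU')).
    + exact (cylinder_coord (fun b : Bty => B' (proj1_sig b)) None).
    + intros phi _; exact (proj2_sig (phi None)). }
  apply He in HU; exact (proj2 HU). }
exists (exist _ e HeE); exact (sub_rep_realizes I eta' U' (exist _ e HeE) HU' He).
Qed.

End SubRepresentation.

Theorem mainTheorem13 (B E : Type) (L : ((E -> B) -> Prop) -> Prop) (B' : B -> Prop) :
  infinite B ->
  gch_at B ->
  local_rep L ->
  card_eq E (pow (pow B)) ->
  exact_wrt (fun I : Type => lt_succ_pow B I) L ->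
  infinite {b | B' b} ->
  local_rep (sub_rep L (sub_domain L B') B') /\
  regular (sub_rep L (sub_domain L B') B') /\
  card_eq {e | sub_domain L B' e} (pow (pow B)).
Proof.
intros _ Hgch HL [hE [HhE _]] Hex Hinf.
destruct (infinite_inhabited Hinf) as [b0].
assert (HE : card_le E (pow (pow B))) by (exists hE; exact HhE).
assert (HE' : card_le {e | sub_domain L B' e} (pow (pow B)))
  by exact (card_le_trans (card_le_sig _ _) HE).
split; [exact (sub_rep_ultrafilter B E L B' HL b0)|split].
- exact (sub_rep_regular B E L B' HL b0 Hgch HE Hex).
- apply card_le_antisym; auto.
  apply NNPP; intros Hnot.
  exact (sub_domain_not_small B E L B' HL Hex Hinf (gch_card_le B _ Hgch HE' Hnot)).
Qed.
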